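(* Let $\mathfrak{B}=\bigcup_{\alpha<\xi}B_\alpha$ be a tightly $\sigma$-filtered Boolean algebra with its fixed chain $(B_\alpha)_{\alpha<\xi}$ and countable subalgebras $R_\alpha,S_\alpha$. Let $\Delta,\Gamma_1,\ldots,\Gamma_n$ be saturated subsets of $\xi$ such that $\Gamma_i\cap\Gamma_j=\Delta$ for all $i\neq j$. Let $P(x_1,\ldots,x_n)$ be a Boolean polynomial and let $a_i\in E(\Gamma_i)$ ($i=1,\ldots,n$) satisfy $P(a_1,\ldots,a_n)=0$. Then there exist $r_i^-,r_i^+\in E(\Delta)$ with $r_i^-\le a_i\le r_i^+$ for each $i$ and $P(r_1^{\varepsilon_1},\ldots,r_n^{\varepsilon_n})=0$ for every choice of signs $\varepsilon_i\in\{+,-\}$.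
   Context: For a subset $X$ of a Boolean algebra, $\langle X\rangle$ is the subalgebra generated by $X$. Two subalgebras $A,S$ commute if whenever $a\in A$, $s\in S$, $a\wedge s=0$, there exist $b_1,b_2\in A\cap S$ with $a\le b_1$, $s\le b_2$, $b_1\wedge b_2=0$. A square of inclusions $R\subseteq A\subseteq B$, $R\subseteq S\subseteq B$ is a push-out diagram if $\langle A\cup S\rangle=B$, $A\cap S=R$, and $A,S$ commute. $\mathfrak{B}$ is tightly $\sigma$-filtered via an increasing chain of subalgebras $(B_\alpha)_{\alpha<\xi}$ ($\xi$ an ordinal) with $B_0=\{0,1\}$, $\mathfrak{B}=\bigcup_{\alpha<\xi}B_\alpha$, $B_\alpha=\bigcup_{\beta<\alpha}B_\beta$ for limit $\alpha$, and for each $\alpha<\xi$ countable subalgebras $R_\alpha,S_\alpha\subseteq\mathfrak{B}$ such that $R_\alpha\subseteq B_\alpha\subseteq B_{\alpha+1}$, $R_\alpha\subseteq S_\alpha\subseteq B_{\alpha+1}$ is a push-out diagram. For $\Gamma\subseteq\xi$, $E(\Gamma)=\langle\bigcup_{i\in\Gamma}S_i\rangle$. A set $\Gamma\subseteq\xi$ is saturated if $R_\gamma\subseteq E(\Gamma\cap\gamma)$ for every $\gamma\in\Gamma$. *)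

From mathcomp Require Import all_boot all_order.
From mathcomp Require Import boolp classical_sets cardinality.
Set Implicit Arguments. Unset Strict Implicit. Unset Printing Implicit Defensive.
Import Order.TTheory.

Section BoolAlg.
Context {d : Order.disp_t} (T : ctbDistrLatticeType d).

Definition subalg (A : set T) : Prop :=
  [/\ A Order.bottom, A Order.top,
      (forall x y, A x -> A y -> A (Order.meet x y)),
      (forall x y, A x -> A y -> A (Order.join x y)) &
      (forall x, A x -> A (Order.compl x))].

Definition gen (X : set T) : set T :=
  fun x => forall A : set T, subalg A -> (forall y, X y -> A y) -> A x.

Definition commute_sub (A S : set T) : Prop :=
  forall a s, A a -> S s -> Order.meet a s = Order.bottom ->
    exists b1 b2, (A b1 /\ S b1) /\ (A b2 /\ S b2) /\
      (a <= b1)%O /\ (s <= b2)%O /\ Order.meet b1 b2 = Order.bottom.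

Definition pushout (R A S B : set T) : Prop :=
  subalg R /\ subalg A /\ subalg S /\ subalg B /\
  (forall x, R x -> A x) /\ (forall x, A x -> B x) /\
  (forall x, R x -> S x) /\ (forall x, S x -> B x) /\
  gen (fun x => A x \/ S x) = B /\
  (fun x => A x /\ S x) = R /\
  commute_sub A S.

Inductive bpoly (n : nat) : Type :=
  | BVar of 'I_n
  | BZero | BOne
  | BMeet of bpoly n & bpoly n
  | BJoin of bpoly n & bpoly n
  | BCompl of bpoly n.

Fixpoint beval (n : nat) (P : bpoly n) (v : 'I_n -> T) : T :=
  match P with
  | BVar i => v i
  | BZero => Order.bottom
  | BOne => Order.top
  | BMeet p q => Order.meet (beval p v) (beval q v)
  | BJoin p q => Order.join (beval p v) (beval q v)
  | BCompl p => Order.compl (beval p v)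
  end.

Section Filtration.
(* The ordinal xi is represented by a well-ordered type I (its elements are
   the ordinals alpha < xi). *)
Context {dI : Order.disp_t} (I : orderType dI).

Definition is_least (a : I) : Prop := forall b : I, ~ (b < a)%O.

Definition is_limit (a : I) : Prop :=
  (exists b : I, (b < a)%O) /\
  forall b : I, (b < a)%O -> exists c : I, (b < c)%O /\ (c < a)%O.

(* B_{alpha+1}: the stage at the successor of alpha if alpha+1 < xi,
   and the whole algebra (= B_xi) if alpha+1 = xi. *)
Definition Bsucc (B : I -> set T) (a : I) : set T :=
  fun x => (exists b : I, (a < b)%O /\ (forall c : I, (a < c)%O -> (b <= c)%O) /\ B b x)
        \/ (forall b : I, ~ (a < b)%O).

Definition tightly_sigma_filtered (B R S : I -> set T) : Prop :=
  well_founded (fun a b : I => (a < b)%O) /\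
  (forall a, subalg (B a)) /\
  (forall a b : I, (a <= b)%O -> forall x, B a x -> B b x) /\
  (forall a, is_least a -> B a = (fun x => x = Order.bottom \/ x = Order.top)) /\
  (forall x : T, exists a, B a x) /\
  (forall a, is_limit a -> B a = (fun x => exists b, (b < a)%O /\ B b x)) /\
  (forall a, countable (R a) /\ countable (S a) /\
             pushout (R a) (B a) (S a) (Bsucc B a)).

Definition E (S : I -> set T) (G : set I) : set T :=
  gen (fun x => exists i, G i /\ S i x).

Definition saturated (R S : I -> set T) (G : set I) : Prop :=
  forall g, G g -> forall x, R g x -> E S (fun i => G i /\ (i < g)%O) x.

End Filtration.
End BoolAlg.

(* The heart of the proof is a separation property: if [x_i ∈ E(Γ_i)] have
   meet 0, then there are [u_i ∈ E(Δ)] with [x_i ≤ u_i] whose meet is still 0.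
   It is proved by well-founded induction on the largest index [m] of a
   generator involved.  Every element of [E(Γ_i ∩ [0,m])] is a finite join of
   terms [s ∧ e] with [s ∈ S_m] and [e ∈ E(Γ_i ∩ [0,m))], and separation is
   preserved by joins in one coordinate, so it suffices to separate tuples of
   such terms.  Since [B_m] and [S_m] commute, the [S_m]-parts are separated
   from the [B_m]-parts by a single [r ∈ R_m]; saturation puts [r] into
   [E(Δ ∩ [0,m))] when [m ∈ Δ], and otherwise into [E(Γ_i ∩ [0,m))] for the
   unique [i] with [m ∈ Γ_i], after which the induction hypothesis applies.
   For the polynomial, apply separation to every atom [⋀ ±a_i] on which [P]
   is 1 (those atoms are 0 because [P(a) = 0]); [r_i^+] is the meet of the
   bounds obtained for [a_i], and [r_i^-] the join of the complements of the
   bounds obtained for [¬a_i]. *)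
From HB Require Import structures.
From mathcomp Require Import all_boot all_order.
From mathcomp Require Import boolp classical_sets cardinality.
From mathcomp Require Import zify.
Set Implicit Arguments. Unset Strict Implicit. Unset Printing Implicit Defensive.
Import Order.Theory.
Local Open Scope order_scope.

Section Subalgebras.
Context {d : Order.disp_t} (T : ctbDistrLatticeType d).
Implicit Types (A X Y : set T).

Lemma subalg0 A : subalg A -> A \bot. Proof. by case. Qed.
Lemma subalg1 A : subalg A -> A \top. Proof. by case. Qed.
Lemma subalgI A x y : subalg A -> A x -> A y -> A (x `&` y).
Proof. by case=> _ _ h _ _; apply: h. Qed.
Lemma subalgU A x y : subalg A -> A x -> A y -> A (x `|` y).
Proof. by case=> _ _ _ h _; apply: h. Qed.
Lemma subalgC A x : subalg A -> A x -> A (~` x).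
Proof. by case=> _ _ _ _ h; apply: h. Qed.

Lemma subalg_meets A (J : Type) (r : seq J) (P : pred J) (F : J -> T) :
  subalg A -> (forall i, P i -> A (F i)) -> A (\meet_(i <- r | P i) F i).
Proof. by move=> hA hF; apply: (big_ind A) => // *; [exact: subalg1 | exact: subalgI]. Qed.

Lemma subalg_joins A (J : Type) (r : seq J) (P : pred J) (F : J -> T) :
  subalg A -> (forall i, P i -> A (F i)) -> A (\join_(i <- r | P i) F i).
Proof. by move=> hA hF; apply: (big_ind A) => // *; [exact: subalg0 | exact: subalgU]. Qed.

Lemma le_bigmeet n (F G : 'I_n -> T) :
  (forall i, F i <= G i) -> \meet_(i < n) F i <= \meet_(i < n) G i.
Proof. by move=> FG; apply: meets_ge => i _; apply: meets_max (FG i). Qed.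

Lemma join_meets (J : Type) (r : seq J) (P : pred J) (c : T) (F : J -> T) :
  c `|` \meet_(i <- r | P i) F i = \meet_(i <- r | P i) (c `|` F i).
Proof. by elim/big_rec2: _ => [|i x y _ <-]; [exact: joinx1 | exact: joinIr]. Qed.

Definition trivial (x : T) := x = \bot \/ x = \top.

Lemma trivial_subalg A x : subalg A -> trivial x -> A x.
Proof. by move=> hA [->|->]; [exact: subalg0 | exact: subalg1]. Qed.

Lemma gen_subalg X : subalg (gen X).
Proof.
split.
- by move=> A hA _; apply: subalg0.
- by move=> A hA _; apply: subalg1.
- by move=> x y hx hy A hA hX; apply: subalgI => //; [apply: hx | apply: hy].
- by move=> x y hx hy A hA hX; apply: subalgU => //; [apply: hx | apply: hy].
- by move=> x hx A hA hX; apply: subalgC => //; apply: hx.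
Qed.

Lemma sub_gen X x : X x -> gen X x.
Proof. by move=> hx A _; apply. Qed.

Lemma gen_min X A : subalg A -> (forall y, X y -> A y) -> forall x, gen X x -> A x.
Proof. by move=> hA hX x; apply. Qed.

Lemma gen_mono X Y : (forall x, X x -> Y x) -> forall x, gen X x -> gen Y x.
Proof. by move=> XY; apply: gen_min (gen_subalg _) _ => y /XY /sub_gen. Qed.

Lemma le_meet_join_compl (c e : T) : e <= (c `&` e) `|` ~` c.
Proof. by rewrite joinC joinIr joinCx meet1x lexUr. Qed.

Lemma meet_join_compl_le (c v : T) : c `&` (v `|` ~` c) <= v.
Proof. by rewrite meetUr meetxC joinx0 leIr. Qed.

Lemma pushout_separate (R A S B : set T) a s : pushout R A S B ->
  A a -> S s -> a `&` s = \bot -> exists r, [/\ R r, s <= r & a `&` r = \bot].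
Proof.
case=> _ [_ [_ [_ [_ [_ [_ [_ [_ [<- comm]]]]]]]]] Aa Ss as0.
have [b1 [b2 [[Ab1 _] [[Ab2 Sb2] [ab1 [sb2 b12]]]]]] := comm a s Aa Ss as0.
exists b2; split => //; apply/eqP; rewrite -lex0 -b12.
by apply: leI2.
Qed.

Inductive join_closure (Tm : set T) : T -> Prop :=
| join_closure0 : join_closure Tm \bot
| join_closure_term t : Tm t -> join_closure Tm t
| join_closureU y z : join_closure Tm y -> join_closure Tm z -> join_closure Tm (y `|` z).

Lemma join_closure_subalg (Tm : set T) : Tm \top ->
  (forall y z, Tm y -> Tm z -> Tm (y `&` z)) ->
  (forall y, Tm y -> join_closure Tm (~` y)) -> subalg (join_closure Tm).
Proof.
move=> Tm1 TmI TmC.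
have termI t w : Tm t -> join_closure Tm w -> join_closure Tm (t `&` w).
  move=> Tt; elim=> [|t' Tt'|y z _ IHy _ IHz].
  - by rewrite meetx0; apply: join_closure0.
  - by apply: join_closure_term; apply: TmI.
  - by rewrite meetUr; apply: join_closureU.
have closI y w : join_closure Tm y -> join_closure Tm w -> join_closure Tm (y `&` w).
  elim=> [|t Tt|y1 y2 _ IH1 _ IH2] Jw.
  - by rewrite meet0x; apply: join_closure0.
  - exact: termI.
  - by rewrite meetUl; apply: join_closureU; [apply: IH1 | apply: IH2].
split => //.
- exact: join_closure0.
- exact: join_closure_term.
- exact: join_closureU.
- move=> x; elim=> [|t Tt|y z _ IHy _ IHz].
  + by rewrite compl0; apply: join_closure_term.
  + exact: TmC.
  + by rewrite complU; apply: closI.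
Qed.

Definition upd n (x : 'I_n -> T) (i : 'I_n) (w : T) : 'I_n -> T :=
  fun j => if j == i then w else x j.

Lemma upd_same n (x : 'I_n -> T) i w : upd x i w i = w.
Proof. by rewrite /upd eqxx. Qed.

Lemma upd_id n (x : 'I_n -> T) i : upd x i (x i) = x.
Proof. by apply: funext => j; rewrite /upd; case: eqP => // ->. Qed.

Lemma meet_upd n (x : 'I_n -> T) i w :
  \meet_(j < n) upd x i (w `&` x i) j = w `&` \meet_(j < n) x j.
Proof.
rewrite (bigD1 i) //= [\meet_(j < n) x j](bigD1 i) //= upd_same -meetA.
congr (_ `&` (_ `&` _)).
by apply: eq_bigr => j /negbTE ji; rewrite /upd ji.
Qed.

Lemma upd_ind n (Tm : 'I_n -> set T) (Q : set ('I_n -> T)) :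
  (forall x i, Q (upd x i \bot)) ->
  (forall x i y z, Q (upd x i y) -> Q (upd x i z) -> Q (upd x i (y `|` z))) ->
  (forall x, (forall i, Tm i (x i)) -> Q x) ->
  forall x, (forall i, join_closure (Tm i) (x i)) -> Q x.
Proof.
move=> Q0 QU Qterm.
suff Qs (s : seq 'I_n) x : (forall i, i \notin s -> Tm i (x i)) ->
    (forall i, join_closure (Tm i) (x i)) -> Q x.
  by move=> x; apply: (Qs (enum 'I_n)) => i; rewrite mem_enum.
elim: s x => [|i s IHs] x xTm xJ; first by apply: Qterm => i; apply: xTm.
rewrite -(upd_id x i); elim: (xJ i) => [|t Tt|y z _ IHy _ IHz]; [exact: Q0 | | exact: QU].
apply: IHs => j; rewrite /upd; case: eqP => [-> | /eqP ji] //.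
- by move=> js; apply: xTm; rewrite inE negb_or ji.
- exact: join_closure_term.
Qed.

End Subalgebras.

Section Filtration.
Context {d : Order.disp_t} (T : ctbDistrLatticeType d).
Context {dI : Order.disp_t} (I : orderType dI) (B R S : I -> set T).
Hypothesis Hfilt : tightly_sigma_filtered B R S.

Lemma pushout_at m : pushout (R m) (B m) (S m) (Bsucc B m).
Proof. by case: Hfilt => _ [_ [_ [_ [_ [_ h]]]]]; case: (h m) => _ []. Qed.

Lemma B_subalg m : subalg (B m).
Proof. by case: Hfilt => _ []. Qed.

Lemma S_subalg m : subalg (S m).
Proof. by case: (pushout_at m) => _ [_ []]. Qed.

Lemma S_sub_B j m x : j < m -> S j x -> B m x.
Proof.
move=> jm Sx.
have : Bsucc B j x by case: (pushout_at j) => _ [_ [_ [_ [_ [_ [_ [h _]]]]]]]; apply: h.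
case=> [[b [jb [bmin Bb]]] | jmax]; last by case: (jmax m).
by case: Hfilt => _ [_ [mono _]]; apply: (mono b) => //; apply: bmin.
Qed.

Lemma E_subalg (G : set I) : subalg (E S G).
Proof. exact: gen_subalg. Qed.

Lemma sub_E (G : set I) j x : G j -> S j x -> E S G x.
Proof. by move=> Gj Sx; apply: sub_gen; exists j. Qed.

Lemma E_mono (G G' : set I) x : (forall k, G k -> G' k) -> E S G x -> E S G' x.
Proof. by move=> GG'; apply: gen_mono => y [j [/GG' G'j Sy]]; exists j. Qed.

Lemma E_sub_B (G : set I) m x : (forall k, G k -> k < m) -> E S G x -> B m x.
Proof.
move=> Gm; apply: gen_min; first exact: B_subalg.
by move=> y [j [/Gm jm Sy]]; apply: S_sub_B Sy.
Qed.

Definition E0 := E S set0.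
Definition Ele (G : set I) (M : I) := E S (fun k => G k /\ k <= M).
Definition Elt (G : set I) (M : I) := E S (fun k => G k /\ k < M).

Lemma E0_sub (G : set I) x : E0 x -> E S G x.
Proof. exact: E_mono. Qed.

Lemma Ele_mono G M M' x : M <= M' -> Ele G M x -> Ele G M' x.
Proof. by move=> MM'; apply: E_mono => k [Gk kM]; split => //; apply: le_trans MM'. Qed.

Definition bounded (G : set I) (y : T) := E0 y \/ exists M, G M /\ Ele G M y.

Lemma bounded2 G u v : bounded G u -> bounded G v ->
  (E0 u /\ E0 v) \/ exists M, [/\ G M, Ele G M u & Ele G M v].
Proof.
move=> [u0 | [M [GM uM]]] [v0 | [M' [GM' vM']]].
- by left.
- by right; exists M'; split => //; apply: E0_sub.
- by right; exists M; split => //; apply: E0_sub.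
- right; case/orP: (le_total M M') => MM'.
    by exists M'; split => //; apply: Ele_mono uM.
  by exists M; split => //; apply: Ele_mono vM'.
Qed.

Lemma bounded_subalg G : subalg (bounded G).
Proof.
have E0sa := E_subalg set0.
have EleU M := E_subalg (fun k => G k /\ k <= M).
split.
- by left; apply: (subalg0 E0sa).
- by left; apply: (subalg1 E0sa).
- move=> u v /bounded2 uv /uv[[u0 v0] | [M [GM uM vM]]].
    by left; apply: (subalgI E0sa u0 v0).
  by right; exists M; split => //; apply: (subalgI (EleU M) uM vM).
- move=> u v /bounded2 uv /uv[[u0 v0] | [M [GM uM vM]]].
    by left; apply: (subalgU E0sa u0 v0).
  by right; exists M; split => //; apply: (subalgU (EleU M) uM vM).
- move=> u [u0 | [M [GM uM]]]; first by left; apply: (subalgC E0sa u0).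
  by right; exists M; split => //; apply: (subalgC (EleU M) uM).
Qed.

Lemma E_bounded G y : E S G y -> bounded G y.
Proof.
apply: gen_min; first exact: bounded_subalg.
by move=> z [j [Gj Sz]]; right; exists j; split => //; apply: sub_E Sz.
Qed.

Lemma E_tuple_bounded n (G : 'I_n -> set I) (x : 'I_n -> T) :
  (forall i, E S (G i) (x i)) ->
  (forall i, E0 (x i)) \/ exists M, (exists i, G i M) /\ forall i, Ele (G i) M (x i).
Proof.
move=> xE.
suff [x0 | [M [GM xM]]] : (forall i, i \in enum 'I_n -> E0 (x i)) \/
    exists M, (exists i, G i M) /\ forall i, i \in enum 'I_n -> Ele (G i) M (x i).
- by left => i; apply: x0; rewrite mem_enum.
- by right; exists M; split => // i; apply: xM; rewrite mem_enum.
elim: (enum 'I_n) => [|i s IHs]; first by left.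
have sub_cons (Q : 'I_n -> Prop) : Q i -> (forall j, j \in s -> Q j) ->
    forall j, j \in i :: s -> Q j by move=> Qi Qs j; rewrite inE => /predU1P[-> | /Qs].
case: (E_bounded (xE i)) IHs => [i0 | [M [GM iM]]] [s0 | [M' [[k GM'] sM']]].
- by left; apply: sub_cons.
- right; exists M'; split; first by exists k.
  by apply: sub_cons => //; apply: E0_sub.
- right; exists M; split; first by exists i.
  by apply: sub_cons => // j /s0; apply: E0_sub.
- right; case/orP: (le_total M M') => MM'.
    exists M'; split; first by exists k.
    by apply: sub_cons => [|j /sM']; [apply: Ele_mono iM | ].
  exists M; split; first by exists i.
  by apply: sub_cons => // j /sM'; apply: Ele_mono.
Qed.

Definition term (G : set I) (m : I) (t : T) :=
  exists s e, [/\ S m s, ~ G m -> trivial s, Elt G m e & t = s `&` e].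

Lemma Ele_join_terms G m x : Ele G m x -> join_closure (term G m) x.
Proof.
have Esa := E_subalg (fun k => G k /\ k < m).
have Ssa := S_subalg m.
have term_S s : S m s -> (~ G m -> trivial s) -> term G m s.
  by move=> Ss s01; exists s, \top; split => //; [apply: subalg1 Esa | rewrite meetx1].
have term_E e : Elt G m e -> term G m e.
  move=> Ee; exists \top, e; split => //; last by rewrite meet1x.
  - exact: subalg1 Ssa.
  - by right.
apply: gen_min.
  apply: join_closure_subalg.
  - by apply: term_S; [apply: subalg1 Ssa | right].
  - move=> _ _ [s1 [e1 [S1 t1 E1 ->]]] [s2 [e2 [S2 t2 E2 ->]]].
    exists (s1 `&` s2), (e1 `&` e2); split.
    + exact: subalgI Ssa S1 S2.
    + move=> nG; case: (t1 nG) => ->; first by left; rewrite meet0x.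
      by rewrite meet1x; apply: t2.
    + exact: subalgI Esa E1 E2.
    + by rewrite meetACA.
  - move=> _ [s [e [Ss ts Ee ->]]]; rewrite complI.
    apply: join_closureU; apply: join_closure_term.
      apply: term_S; first exact: subalgC Ssa Ss.
      by move=> nG; case: (ts nG) => ->; [right; apply: compl0 | left; apply: compl1].
    by apply: term_E; apply: subalgC Esa Ee.
move=> y [j [[Gj jm] Sy]]; apply: join_closure_term.
case: (eqVneq j m) => [j_eq_m | j_ne_m]; first by apply: term_S; rewrite -j_eq_m.
by apply: term_E; apply: sub_E Sy; split => //; rewrite lt_neqAle j_ne_m.
Qed.

Section Separation.
Variables (n : nat) (Dl : set I) (G : 'I_n -> set I).
Hypotheses (satDl : saturated R S Dl) (satG : forall i, saturated R S (G i)).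
Hypothesis Dl_sub_G : forall i k, Dl k -> G i k.
Hypothesis G_disjoint : forall i j, i <> j -> forall k, G i k -> G j k -> Dl k.

Definition separated (x : 'I_n -> T) := exists u : 'I_n -> T,
  (forall i, E S Dl (u i) /\ x i <= u i) /\ \meet_(i < n) u i = \bot.

Definition meet0_separated (x : 'I_n -> T) := \meet_(i < n) x i = \bot -> separated x.

Lemma E0_separated x : (forall i, E0 (x i)) -> meet0_separated x.
Proof. by move=> x0 x_bot; exists x; split => // i; split => //; apply: E0_sub. Qed.

Lemma upd_bot_separated x i : meet0_separated (upd x i \bot).
Proof.
move=> _; exists (upd (fun=> \top) i \bot); split.
  move=> j; rewrite /upd; case: (j == i); split => //;
    by [apply: subalg0 (E_subalg _) | apply: subalg1 (E_subalg _) | apply: lex1].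
by apply/eqP; rewrite -lex0; apply: (meets_max (j := i)) => //; rewrite upd_same.
Qed.

Lemma upd_join_separated x i y z : meet0_separated (upd x i y) ->
  meet0_separated (upd x i z) -> meet0_separated (upd x i (y `|` z)).
Proof.
move=> sepy sepz xyz0.
have le_upd w : w <= y `|` z -> \meet_(j < n) upd x i w j <= \meet_(j < n) upd x i (y `|` z) j.
  by move=> wyz; apply: le_bigmeet => j; rewrite /upd; case: eqP.
have [u [uE uy]] : separated (upd x i y).
  by apply: sepy; apply/eqP; rewrite -lex0 -xyz0 le_upd ?leUl.
have [v [vE vz]] : separated (upd x i z).
  by apply: sepz; apply/eqP; rewrite -lex0 -xyz0 le_upd ?leUr.
exists (upd (fun j => u j `&` v j) i (u i `|` v i)); split.
  move=> j; case: (uE j) (vE j) => Eu xu [Ev xv]; rewrite /upd in xu xv *.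
  case: eqP => [ji | _] in xu xv *; [rewrite -ji | ]; split.
  - exact: subalgU (E_subalg _) Eu Ev.
  - exact: leU2.
  - exact: subalgI (E_subalg _) Eu Ev.
  - by rewrite lexI xu xv.
apply/eqP; rewrite -lex0; set w := \meet_(j < n) _.
have wi : w <= u i `|` v i by apply: (meets_max (j := i)) => //; rewrite upd_same.
rewrite -(meet_idPl wi) meetUr leUx; apply/andP; split.
  rewrite -uy; apply: meets_ge => j _; case: (eqVneq j i) => [-> | ji]; first exact: leIr.
  by apply: leIxl; apply: (meets_max (j := j)) => //; rewrite /upd (negbTE ji) leIl.
rewrite -vz; apply: meets_ge => j _; case: (eqVneq j i) => [-> | ji]; first exact: leIr.
by apply: leIxl; apply: (meets_max (j := j)) => //; rewrite /upd (negbTE ji) leIr.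
Qed.

Section Step.
Variable m : I.
Hypothesis IHm : forall y, (forall i, Elt (G i) m (y i)) -> meet0_separated y.

Lemma Elt_sub_B G' x : Elt G' m x -> B m x.
Proof. by apply: E_sub_B => k []. Qed.

Lemma Dl_terms_separated (s e : 'I_n -> T) : Dl m -> (forall i, S m (s i)) ->
  (forall i, Elt (G i) m (e i)) -> meet0_separated (fun i => s i `&` e i).
Proof.
move=> Dlm Ss Ee se0.
have [r [Rr sr er]] : exists r, [/\ R m r, \meet_(i < n) s i <= r &
    \meet_(i < n) e i `&` r = \bot].
  apply: pushout_separate (pushout_at m) _ _ _.
  - by apply: subalg_meets (B_subalg m) _ => i _; apply: Elt_sub_B (Ee i).
  - by apply: subalg_meets (S_subalg m) _.
  - by rewrite meetC -big_split.
have Er : Elt Dl m r by apply: satDl.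
have [v [vE rev]] : separated (fun i => r `&` e i).
  apply: IHm.
    move=> i; apply: subalgI (E_subalg _) _ (Ee i).
    by apply: E_mono Er => k [/(Dl_sub_G i)].
  apply/eqP; rewrite -lex0 -er lexI; apply/andP; split.
    by apply: le_bigmeet => i; apply: leIr.
  apply: (@le_trans _ _ (\meet_(i < n) (r `|` (s i `&` e i)))).
    by apply: le_bigmeet => i; apply: le_trans (leIl _ _) (leUl _ _).
  by rewrite -join_meets se0 joinx0.
exists (fun i => s i `&` (v i `|` ~` r)); split.
  move=> i; have [Ev ev] := vE i; split.
    apply: subalgI (E_subalg _) (sub_E Dlm (Ss i)) _.
    apply: subalgU (E_subalg _) Ev (subalgC (E_subalg _) _).
    by apply: E_mono Er => k [].
  apply: leI2 => //; apply: le_trans (le_meet_join_compl r (e i)) _.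
  exact: leU2.
apply/eqP; rewrite -lex0 -rev; apply: meets_ge => j _.
apply: le_trans (meet_join_compl_le r (v j)); rewrite lexI; apply/andP; split.
  by apply: le_trans sr; apply: le_bigmeet => i; apply: leIl.
by apply: (meets_max (j := j)) => //; apply: leIr.
Qed.

Lemma upd_term_separated (z : 'I_n -> T) i0 s : G i0 m -> S m s ->
  (forall i, Elt (G i) m (z i)) -> meet0_separated (upd z i0 (s `&` z i0)).
Proof.
move=> Gi0 Ss Ez; rewrite /meet0_separated meet_upd => sz0.
have [r [Rr sr zr]] : exists r, [/\ R m r, s <= r & \meet_(i < n) z i `&` r = \bot].
  apply: pushout_separate (pushout_at m) _ Ss _; last by rewrite meetC.
  by apply: subalg_meets (B_subalg m) _ => i _; apply: Elt_sub_B (Ez i).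
have Er : Elt (G i0) m r by apply: satG.
have [v [vE zv]] : separated (upd z i0 (r `&` z i0)).
  apply: IHm; last by rewrite meet_upd meetC.
  move=> i; rewrite /upd; case: eqP => [-> | _]; last exact: Ez.
  exact: subalgI (E_subalg _) Er (Ez i0).
exists v; split => // i; have [Ev zvi] := vE i; split => //.
by apply: le_trans zvi; rewrite /upd; case: eqP => // _; apply: leI2.
Qed.

End Step.

Definition separated_below (m : I) :=
  forall x, (forall i, Ele (G i) m (x i)) -> meet0_separated x.

Lemma separated_below_step m :
  (forall M, M < m -> separated_below M) -> separated_below m.
Proof.
move=> IH x Ex.
have IHm y : (forall i, Elt (G i) m (y i)) -> meet0_separated y.
  move=> Ey; case: (E_tuple_bounded Ey) => [y0 | [M [[i0 [_ Mm]] yM]]].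
    exact: E0_separated.
  by apply: (IH M Mm) => i; apply: E_mono (yM i) => k [[Gk _] kM].
apply: (upd_ind (@upd_bot_separated) (@upd_join_separated) _
  (fun i => Ele_join_terms (Ex i))) => z zt.
have /choice[p pt] : forall i, exists q : T * T,
    [/\ S m q.1, ~ G i m -> trivial q.1, Elt (G i) m q.2 & z i = q.1 `&` q.2].
  by move=> i; have [s [e ?]] := zt i; exists (s, e).
pose s i := (p i).1; pose e i := (p i).2.
have Ss i : S m (s i) by case: (pt i).
have Ee i : Elt (G i) m (e i) by case: (pt i).
have trivial_Elt i : ~ G i m -> Elt (G i) m (s i `&` e i).
  move=> nGi; have [_ /(_ nGi) s01 _ _] := pt i.
  exact: subalgI (E_subalg _) (trivial_subalg (E_subalg _) s01) (Ee i).
have -> : z = fun i => s i `&` e i by apply: funext => i; case: (pt i).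
case: (pselect (Dl m)) => [Dlm | nDlm]; first exact: (Dl_terms_separated IHm Dlm Ss Ee).
case: (pselect (exists i0, G i0 m)) => [[i0 Gi0] | nG]; last first.
  by apply: IHm => i; apply: trivial_Elt => Gi; apply: nG; exists i.
pose z' := upd (fun i => s i `&` e i) i0 (e i0).
have -> : (fun i => s i `&` e i) = upd z' i0 (s i0 `&` z' i0).
  by apply: funext => i; rewrite /z' /upd eqxx; case: eqP => // ->.
apply: (upd_term_separated IHm Gi0 (Ss i0)) => i; rewrite /z' /upd.
case: eqP => [-> // | ii0].
by apply: trivial_Elt => Gi; apply: nDlm; exact: (G_disjoint ii0 Gi Gi0).
Qed.

Lemma E_separated x : (forall i, E S (G i) (x i)) -> meet0_separated x.
Proof.
have sep_below m : separated_below m.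
  case: Hfilt => wf _; elim/(well_founded_ind wf): m.
  exact: separated_below_step.
by move/E_tuple_bounded => [x0 | [M [_ xM]]]; [apply: E0_separated | apply: sep_below xM].
Qed.

End Separation.

Lemma separated_mono n (Dl Dl' : set I) (x : 'I_n -> T) :
  (forall k, Dl k -> Dl' k) -> separated Dl x -> separated Dl' x.
Proof.
move=> DlDl' [u [uE u0]]; exists u; split => // i.
by have [Eu xu] := uE i; split => //; apply: E_mono Eu.
Qed.

(* For [n <= 1] the hypothesis on [Γ_i ∩ Γ_j] says nothing about [Δ], so
   one separates over the empty set instead. *)
Lemma pairwise_separated n (Delta : set I) (Gamma : 'I_n -> set I) :
  saturated R S Delta -> (forall i, saturated R S (Gamma i)) ->
  (forall i j, i <> j -> (fun k => Gamma i k /\ Gamma j k) = Delta) ->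
  forall x, (forall i, E S (Gamma i) (x i)) -> meet0_separated Delta x.
Proof.
move=> satD satG GG x Ex; case: (ltnP 1 n) => [n_gt1 | n_le1].
  apply: E_separated Ex => // [i k | i j ij k Gi Gj]; last by rewrite -(GG i j ij).
  have [j ij] : exists j, i <> j.
    have n_gt0 := ltn_trans (ltn0Sn 0) n_gt1.
    case: (eqVneq i (Ordinal n_gt0)) => [-> | ?]; last by exists (Ordinal n_gt0); apply/eqP.
    by exists (Ordinal n_gt1); move/(congr1 val).
  by rewrite -(GG i j ij) => -[].
have disj (i j : 'I_n) : i <> j -> forall k, Gamma i k -> Gamma j k -> set0 k.
  by case; apply: ord_inj; move: (ltn_ord i) (ltn_ord j); lia.
by move=> x0; apply: separated_mono (E_separated _ _ _ disj Ex x0).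
Qed.

End Filtration.

Section Polynomials.
Context {d : Order.disp_t} {T : ctbDistrLatticeType d}.

HB.instance Definition _ := Monoid.isAddLaw.Build T Order.meet Order.join meetUl meetUr.

Definition signed (b : bool) (y : T) := if b then y else ~` y.

Definition atom n (sg : 'I_n -> bool) (x : 'I_n -> T) := \meet_(i < n) signed (sg i) (x i).

Definition boolv n (sg : 'I_n -> bool) : 'I_n -> T := fun i => if sg i then \top else \bot.

Lemma meet_atom_beval n (P : bpoly n) sg (x : 'I_n -> T) :
  atom sg x `&` beval P x = atom sg x `&` beval P (boolv sg).
Proof.
have meet_compl (a p q : T) : a `&` p = a `&` q -> a `&` ~` p = a `&` ~` q.
  have aC r : a `&` ~` r = a `&` ~` (a `&` r) by rewrite complI meetUr meetxC join0x.
  by move=> apq; rewrite aC apq -aC.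
have meetIr (a b c : T) : a `&` (b `&` c) = (a `&` b) `&` (a `&` c).
  by rewrite meetACA meetxx.
elim: P => [i| | |p IHp q IHq|p IHp q IHq|p IHp] //=.
- have : atom sg x <= signed (sg i) (x i) by apply: (meets_max (j := i)).
  rewrite /boolv /signed; case: (sg i) => xi; first by rewrite meetx1; apply/meet_idPl.
  by rewrite meetx0; apply/eqP; rewrite -lex0 -(meetCx (x i)) leI2.
- by rewrite meetIr IHp IHq -meetIr.
- by rewrite !meetUr IHp IHq.
- exact: meet_compl.
Qed.

Lemma beval_boolv n (P : bpoly n) sg : trivial (beval P (boolv sg)).
Proof.
rewrite /trivial; elim: P => [i| | |p IHp q IHq|p IHp q IHq|p IHp] /=.
- by rewrite /boolv; case: (sg i); [right | left].
- by left.
- by right.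
- by case: IHp => ->; [left; rewrite meet0x | rewrite meet1x].
- by case: IHp => ->; [rewrite join0x | right; rewrite join1x].
- by case: IHp => ->; [right; rewrite compl0 | left; rewrite compl1].
Qed.

Lemma atoms_cover n (x : 'I_n -> T) y :
  (forall sg : {ffun 'I_n -> bool}, atom sg x `&` y = \bot) -> y = \bot.
Proof.
move=> atom_y; rewrite -[y]meetx1.
have <- : \join_(sg : {ffun 'I_n -> bool}) atom sg x = \top.
  rewrite /atom -(bigA_distr_bigA (fun i b => signed b (x i))).
  by apply: big1 => i _; rewrite big_bool /= joinxC.
by rewrite big_distrr /=; apply: big1 => sg _; rewrite meetC.
Qed.

Lemma beval_bot_of_atom_bounds n (P : bpoly n)
    (U : {ffun 'I_n -> bool} -> 'I_n -> T) (x : 'I_n -> T) :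
  (forall sg : {ffun _ -> _}, beval P (boolv sg) = \top -> \meet_(i < n) U sg i = \bot) ->
  (forall (sg : {ffun _ -> _}) i, signed (sg i) (x i) <= U sg i) -> beval P x = \bot.
Proof.
move=> U0 xU; apply: (atoms_cover (x := x)) => sg; rewrite meet_atom_beval.
case: (beval_boolv P sg) => Psg; rewrite Psg; first by rewrite meetx0.
by rewrite meetx1; apply/eqP; rewrite -lex0 -(U0 sg Psg); apply: le_bigmeet.
Qed.

Lemma beval_interpolants n (C : set T) (P : bpoly n) (a : 'I_n -> T) : subalg C ->
  (forall sg : {ffun 'I_n -> bool}, beval P (boolv sg) = \top -> exists u : 'I_n -> T,
     (forall i, C (u i) /\ signed (sg i) (a i) <= u i) /\ \meet_(i < n) u i = \bot) ->
  exists rm rp : 'I_n -> T,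
    (forall i, [/\ C (rm i), C (rp i), rm i <= a i & a i <= rp i]) /\
    (forall eps : 'I_n -> bool, beval P (fun i => if eps i then rp i else rm i) = \bot).
Proof.
move=> Csa sep.
have /choice[U hU] : forall sg : {ffun 'I_n -> bool}, exists u : 'I_n -> T,
    (forall i, C (u i) /\ signed (sg i) (a i) <= u i) /\
    (beval P (boolv sg) = \top -> \meet_(i < n) u i = \bot).
  move=> sg; case: (pselect (beval P (boolv sg) = \top)) => [/sep[u [uC u0]] | nP].
    by exists u.
  exists (fun=> \top); split=> [i | /nP //].
  by split; [exact: subalg1 Csa | exact: lex1].
pose rp i := \meet_(sg : {ffun 'I_n -> bool} | sg i) U sg i.
pose rm i := \join_(sg : {ffun 'I_n -> bool} | ~~ sg i) ~` U sg i.
have signed_le x (sg : {ffun 'I_n -> bool}) i :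
    rm i <= x <= rp i -> signed (sg i) x <= U sg i.
  case/andP=> mx xp; rewrite /signed; case: ifP => sgi.
    by apply: le_trans xp _; apply: meets_inf.
  by rewrite leCx; apply: le_trans mx; apply: joins_sup; rewrite sgi.
have a_between i : rm i <= a i <= rp i.
  apply/andP; split.
    by apply: joins_le => sg /negbTE sgi; have [/(_ i) [_]] := hU sg; rewrite /signed sgi leCx.
  by apply: meets_ge => sg sgi; have [/(_ i) [_]] := hU sg; rewrite /signed sgi.
exists rm, rp; split.
  move=> i; have /andP[mai api] := a_between i; split => //.
  - apply: subalg_joins (Csa) _ => sg _; apply: subalgC (Csa) _.
    by case: (hU sg) => /(_ i) [].
  - by apply: subalg_meets (Csa) _ => sg _; case: (hU sg) => /(_ i) [].
move=> eps; apply: (beval_bot_of_atom_bounds (U := U)) => [sg | sg i]; first by case: (hU sg).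
apply: signed_le; have /andP[mai api] := a_between i.
by case: (eps i); rewrite ?lexx ?(le_trans mai api).
Qed.

End Polynomials.

Theorem lemma3p4 {d : Order.disp_t} (T : ctbDistrLatticeType d)
  {dI : Order.disp_t} (I : orderType dI) (B R S : I -> set T)
  (Hfilt : tightly_sigma_filtered B R S)
  (n : nat) (Delta : set I) (Gamma : 'I_n -> set I)
  (HDelta : saturated R S Delta)
  (HGamma : forall i, saturated R S (Gamma i))
  (Hint : forall i j : 'I_n, i <> j -> (fun k => Gamma i k /\ Gamma j k) = Delta)
  (P : bpoly n) (a : 'I_n -> T)
  (Ha : forall i, E S (Gamma i) (a i))
  (HP : beval P a = Order.bottom) :
  exists rm rp : 'I_n -> T,
    (forall i, [/\ E S Delta (rm i), E S Delta (rp i),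
                   (rm i <= a i)%O & (a i <= rp i)%O]) /\
    (forall eps : 'I_n -> bool,
        beval P (fun i => if eps i then rp i else rm i) = Order.bottom).
Proof.
apply: beval_interpolants; first exact: E_subalg.
move=> sg Psg; apply: (pairwise_separated Hfilt HDelta HGamma Hint).
- move=> i; rewrite /signed; case: (sg i); first exact: Ha.
  by apply: subalgC (Ha i); apply: E_subalg.
- by have := meet_atom_beval P sg a; rewrite HP Psg meetx0 meetx1.
Qed.
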